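(* Let $H_1,H_2$ be separable Hilbert spaces, $K\in B(H_1)$, $L\in B(H_2)$. Let $\{x_n\}_{n\geqslant1}$ be a $K$-frame for $H_1$ and $\{y_n\}_{n\geqslant1}$ an $L$-frame for $H_2$, and let $\theta_1,\theta_2$ be their analysis operators (frame transforms). If $R(\theta_1)\perp R(\theta_2)$ in $\ell^2$, then $\{x_n\oplus y_n\}_{n\geqslant1}$ is a $K\oplus L$-frame for $H_1\oplus H_2$.
   Context: $H_1\oplus H_2$ is the Hilbert space of pairs $x\oplus y$ with inner product $\langle x\oplus y,a\oplus b\rangle=\langle x,a\rangle+\langle y,b\rangle$; $(K\oplus L)(x\oplus y)=K(x)\oplus L(y)$. For a Hilbert space $H$ and $K\in B(H)$, $\{z_n\}_{n\geqslant1}$ is a $K$-frame if there are $A,B>0$ with $A\|K^*z\|^2\leq\sum_n|\langle z,z_n\rangle|^2\leq B\|z\|^2$ for all $z\in H$. The analysis operator of such a sequence is $\theta:H\to\ell^2$, $\theta(z)=\{\langle z,z_n\rangle\}_{n\geqslant1}$; $R(\cdot)$ denotes range. *)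

From HB Require Import structures.
From mathcomp Require Import all_boot all_order all_algebra complex.
From mathcomp Require Import all_classical all_reals all_analysis.
Set Implicit Arguments. Unset Strict Implicit. Unset Printing Implicit Defensive.
Import Order.TTheory GRing.Theory Num.Theory numFieldNormedType.Exports.
Local Open Scope classical_set_scope.
Local Open Scope ring_scope.

Section Hilbert.
Context {R : realType}.

Definition sqmodC (z : R[i]) : R := complex.Re z ^+ 2 + complex.Im z ^+ 2.

Context {V : lmodType R[i]}.

Definition is_inner_product (ip : V -> V -> R[i]) : Prop :=
  [/\ forall (a : R[i]) (x y z : V), ip (a *: x + y) z = a * ip x z + ip y z,
      forall x y : V, ip y x = (ip x y)^*,
      forall x : V, 0 <= ip x x
    & forall x : V, ip x x = 0 -> x = 0].

Definition ipnorm (ip : V -> V -> R[i]) (x : V) : R := Num.sqrt (complex.Re (ip x x)).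

Definition ip_complete (ip : V -> V -> R[i]) : Prop :=
  forall u : nat -> V,
    (forall e : R, 0 < e -> exists N : nat, forall m n : nat, (N <= m)%N -> (N <= n)%N ->
        ipnorm ip (u m - u n) < e) ->
    exists l : V, (fun n => ipnorm ip (u n - l)) @ \oo --> (0 : R).

Definition ip_separable (ip : V -> V -> R[i]) : Prop :=
  exists d : nat -> V, forall (x : V) (e : R), 0 < e -> exists n : nat, ipnorm ip (x - d n) < e.

Definition is_separable_hilbert (ip : V -> V -> R[i]) : Prop :=
  [/\ is_inner_product ip, ip_complete ip & ip_separable ip].

Definition is_bounded_op (ip : V -> V -> R[i]) (K : V -> V) : Prop :=
  (forall (a : R[i]) (x y : V), K (a *: x + y) = a *: K x + K y) /\
  exists M : R, forall x : V, ipnorm ip (K x) <= M * ipnorm ip x.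

Definition is_adjoint (ip : V -> V -> R[i]) (K Kadj : V -> V) : Prop :=
  forall x y : V, ip (K x) y = ip x (Kadj y).

(* sum_n |<z, z_n>|^2, as an extended real (always defined) *)
Definition frame_sum (ip : V -> V -> R[i]) (zs : nat -> V) (z : V) : \bar R :=
  (\sum_(n <oo) (sqmodC (ip z (zs n)))%:E)%E.

(* {z_n} is a K-frame: A ||K^* z||^2 <= sum_n |<z,z_n>|^2 <= B ||z||^2.
   K^* is any (the) adjoint of K. *)
Definition is_K_frame (ip : V -> V -> R[i]) (K : V -> V) (zs : nat -> V) : Prop :=
  exists A B : R, [/\ 0 < A, 0 < B,
    forall z : V, (frame_sum ip zs z <= (B * ipnorm ip z ^+ 2)%:E)%E
  & forall Kadj : V -> V, is_adjoint ip K Kadj ->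
      forall z : V, ((A * ipnorm ip (Kadj z) ^+ 2)%:E <= frame_sum ip zs z)%E].

Definition analysis_op (ip : V -> V -> R[i]) (zs : nat -> V) (z : V) : nat -> R[i] :=
  fun n => ip z (zs n).

End Hilbert.

Definition l2_ip {R : realType} (a b : nat -> R[i]) : R[i] :=
  Complex (limn (series (fun n => complex.Re (a n * (b n)^*))))
          (limn (series (fun n => complex.Im (a n * (b n)^*)))).

Definition dsum_ip {R : realType} {V1 V2 : lmodType R[i]}
  (ip1 : V1 -> V1 -> R[i]) (ip2 : V2 -> V2 -> R[i]) (p q : V1 * V2) : R[i] :=
  ip1 p.1 q.1 + ip2 p.2 q.2.

Definition dsum_op {V1 V2 : Type} (K : V1 -> V1) (L : V2 -> V2) (p : V1 * V2) : V1 * V2 :=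
  (K p.1, L p.2).

Definition dsum_seq {V1 V2 : Type} (x : nat -> V1) (y : nat -> V2) : nat -> V1 * V2 :=
  fun n => (x n, y n).

From HB Require Import structures.
From mathcomp Require Import all_boot all_order all_algebra complex.
From mathcomp Require Import all_classical all_reals all_analysis.
From mathcomp Require Import lra.
Import Order.TTheory GRing.Theory Num.Theory numFieldNormedType.Exports.
Local Open Scope ring_scope.

(* For z = (a, b) the frame sum of (x_n (+) y_n) is
   sum |<a,x_n>|^2 + sum |<b,y_n>|^2 + 2 Re <theta1 a, theta2 b>,
   and orthogonality of the ranges kills the cross term.  Norms add in the
   direct sum and every adjoint of K (+) L is K' (+) L' with K', L' adjoints of
   K and L, so min(A1, A2) and max(B1, B2) are frame bounds. *)

Section RealLemmas.
Context {R : realType}.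

Lemma eseries_EFin_limn (f : nat -> R) : cvgn (series f) ->
  (\sum_(n <oo) (f n)%:E)%E = (limn (series f))%:E.
Proof.
move=> cf; rewrite -EFin_lim //; congr (limn _); apply/funext => N /=.
by rewrite sumEFin.
Qed.

Lemma eseriesD_null_cross (p q c : nat -> R) :
  (forall n, 0 <= p n) -> (forall n, 0 <= q n) ->
  (forall n, `|c n| <= p n + q n) ->
  (\sum_(n <oo) (p n)%:E < +oo)%E -> (\sum_(n <oo) (q n)%:E < +oo)%E ->
  limn (series c) = 0 ->
  (\sum_(n <oo) (p n + q n + c n *+ 2)%:E)%E =
  (\sum_(n <oo) (p n)%:E + \sum_(n <oo) (q n)%:E)%E.
Proof.
move=> p0 q0 c_le fp fq c0.
have cp := nnseries_is_cvg p0 fp; have cq := nnseries_is_cvg q0 fq.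
have cpq : cvgn (series (p + q)) by exact: is_cvg_seriesD.
have cc : cvgn (series c).
  apply: normed_cvg; apply: (series_le_cvg _ _ _ cpq) => n //=.
  by rewrite addr_ge0.
have c2 : cvgn (series ((2 : R) *: c)) by exact: is_cvg_seriesZ.
rewrite (@eq_eseriesr _ _ (fun n => ((p + q + (2 : R) *: c) n)%:E)); last first.
  by move=> n _; rewrite !fctE scaler_nat.
rewrite (eseries_EFin_limn (p + q + (2 : R) *: c)); last exact: is_cvg_seriesD.
rewrite lim_seriesD // lim_seriesZ // c0 scaler0 addr0 lim_seriesD //.
by rewrite (eseries_EFin_limn p) // (eseries_EFin_limn q).
Qed.

Lemma ler_maxMD (B1 B2 u v : R) : 0 <= u -> 0 <= v ->
  B1 * u + B2 * v <= Num.max B1 B2 * (u + v).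
Proof.
move=> u0 v0; rewrite mulrDr lerD // ler_wpM2r // le_max lexx ?orbT //.
Qed.

Lemma ler_minMD (A1 A2 u v : R) : 0 <= u -> 0 <= v ->
  Num.min A1 A2 * (u + v) <= A1 * u + A2 * v.
Proof.
move=> u0 v0; rewrite mulrDr lerD // ler_wpM2r // ge_min lexx ?orbT //.
Qed.

End RealLemmas.

Section Sqmod.
Context {R : realType}.
Implicit Types u v : R[i].

Lemma Re_mul_conj u v :
  complex.Re (u * v^*) = complex.Re u * complex.Re v + complex.Im u * complex.Im v.
Proof. by case: u => a b; case: v => c d /=; lra. Qed.

Lemma ReD u v : complex.Re (u + v) = complex.Re u + complex.Re v.
Proof. by case: u => a b; case: v. Qed.

Lemma sqmodC_ge0 u : 0 <= sqmodC u.
Proof. by rewrite /sqmodC addr_ge0 // sqr_ge0. Qed.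

Lemma sqmodCD u v : sqmodC (u + v) = sqmodC u + sqmodC v + complex.Re (u * v^*) *+ 2.
Proof. by rewrite Re_mul_conj /sqmodC; case: u => a b; case: v => c d /=; lra. Qed.

Lemma normr_Re_mul_conj_le u v : `|complex.Re (u * v^*)| <= sqmodC u + sqmodC v.
Proof.
rewrite Re_mul_conj /sqmodC; case: u => a b; case: v => c d /=.
have := sqr_ge0 (a - c); have := sqr_ge0 (b - d).
have := sqr_ge0 (a + c); have := sqr_ge0 (b + d).
by rewrite ler_norml => *; apply/andP; split; nra.
Qed.

End Sqmod.

Section InnerProduct.
Context {R : realType} {V : lmodType R[i]} {ip : V -> V -> R[i]}.
Hypothesis ip_inner : is_inner_product ip.

Lemma ipDl x y z : ip (x + y) z = ip x z + ip y z.
Proof. by case: ip_inner => lin _ _ _; have := lin 1 x y z; rewrite scale1r mul1r. Qed.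

Lemma ip0l z : ip 0 z = 0.
Proof. by apply: (@addrI _ (ip 0 z)); rewrite -ipDl !addr0. Qed.

Lemma ipDr x y z : ip x (y + z) = ip x y + ip x z.
Proof. by case: ip_inner => _ herm _ _; rewrite herm ipDl rmorphD /= -!herm. Qed.

Lemma ipBr x y z : ip x (y - z) = ip x y - ip x z.
Proof. by apply: (@addrI _ (ip x z)); rewrite -ipDr addrC subrK addrC subrK. Qed.

Lemma ipr_inj c d : (forall u, ip u c = ip u d) -> c = d.
Proof.
move=> cd; apply/eqP; rewrite -subr_eq0; apply/eqP.
by case: ip_inner => _ _ _; apply; rewrite ipBr cd subrr.
Qed.

Lemma ip_Re_ge0 x : 0 <= complex.Re (ip x x).
Proof. by case: ip_inner => _ _ /(_ x); rewrite lecE /= => /andP[]. Qed.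

Lemma ipnorm_sqr x : ipnorm ip x ^+ 2 = complex.Re (ip x x).
Proof. by rewrite /ipnorm sqr_sqrtr // ip_Re_ge0. Qed.

End InnerProduct.

Lemma bounded_op0 {R : realType} {V : lmodType R[i]} (ip : V -> V -> R[i]) (K : V -> V) :
  is_bounded_op ip K -> K 0 = 0.
Proof.
case=> lin _; apply: (@addrI _ (K 0)); rewrite addr0.
by have := lin 1 0 0; rewrite !scale1r addr0 => <-.
Qed.

Section DirectSum.
Context {R : realType} {V1 V2 : lmodType R[i]}.
Context {ip1 : V1 -> V1 -> R[i]} {ip2 : V2 -> V2 -> R[i]}.
Hypotheses (ip1_inner : is_inner_product ip1) (ip2_inner : is_inner_product ip2).

Lemma ipnorm_dsum_sqr a b :
  ipnorm (dsum_ip ip1 ip2) (a, b) ^+ 2 = ipnorm ip1 a ^+ 2 + ipnorm ip2 b ^+ 2.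
Proof.
rewrite (ipnorm_sqr ip1_inner) (ipnorm_sqr ip2_inner) /ipnorm /dsum_ip /= ReD.
by rewrite sqr_sqrtr // addr_ge0 // ip_Re_ge0.
Qed.

Lemma frame_sum_dsum (x : nat -> V1) (y : nat -> V2) a b :
  (frame_sum ip1 x a < +oo)%E -> (frame_sum ip2 y b < +oo)%E ->
  complex.Re (l2_ip (analysis_op ip1 x a) (analysis_op ip2 y b)) = 0 ->
  frame_sum (dsum_ip ip1 ip2) (dsum_seq x y) (a, b) =
  (frame_sum ip1 x a + frame_sum ip2 y b)%E.
Proof.
move=> fina finb orth; rewrite /frame_sum.
under eq_eseriesr do rewrite /dsum_ip /dsum_seq /= sqmodCD.
by apply: eseriesD_null_cross => // n; [exact: sqmodC_ge0 | exact: sqmodC_ge0 |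
  exact: normr_Re_mul_conj_le].
Qed.

Lemma dsum_adjoint {K : V1 -> V1} {L : V2 -> V2} {T : V1 * V2 -> V1 * V2} :
  K 0 = 0 -> L 0 = 0 -> is_adjoint (dsum_ip ip1 ip2) (dsum_op K L) T ->
  exists K' L', [/\ is_adjoint ip1 K K', is_adjoint ip2 L L' & T =1 dsum_op K' L'].
Proof.
move=> K0 L0 adjT.
have adjT1 u p : ip1 (K u) p.1 = ip1 u (T p).1.
  by have := adjT (u, 0) p; rewrite /dsum_ip /dsum_op /= L0 !(ip0l ip2_inner) !addr0.
have adjT2 u p : ip2 (L u) p.2 = ip2 u (T p).2.
  by have := adjT (0, u) p; rewrite /dsum_ip /dsum_op /= K0 !(ip0l ip1_inner) !add0r.
exists (fun a => (T (a, 0)).1), (fun b => (T (0, b)).2); split.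
- by move=> u a; exact: (adjT1 u (a, 0)).
- by move=> u b; exact: (adjT2 u (0, b)).
- case=> a b; rewrite [T _]surjective_pairing /dsum_op /=; congr (_, _).
  + by apply: (ipr_inj ip1_inner) => u; rewrite -adjT1 -(adjT1 u (a, 0)).
  + by apply: (ipr_inj ip2_inner) => u; rewrite -adjT2 -(adjT2 u (0, b)).
Qed.

End DirectSum.

Theorem proposition2p10 (R : realType) (V1 V2 : lmodType R[i])
  (ip1 : V1 -> V1 -> R[i]) (ip2 : V2 -> V2 -> R[i])
  (K : V1 -> V1) (L : V2 -> V2) (x : nat -> V1) (y : nat -> V2) :
  is_separable_hilbert ip1 -> is_separable_hilbert ip2 ->
  is_bounded_op ip1 K -> is_bounded_op ip2 L ->
  is_K_frame ip1 K x -> is_K_frame ip2 L y ->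
  (forall (a : V1) (b : V2), l2_ip (analysis_op ip1 x a) (analysis_op ip2 y b) = 0) ->
  is_K_frame (dsum_ip ip1 ip2) (dsum_op K L) (dsum_seq x y).
Proof.
move=> [ip1_inner _ _] [ip2_inner _ _] /bounded_op0 K0 /bounded_op0 L0.
move=> [A1 [B1 [A1_gt0 B1_gt0 up1 lo1]]] [A2 [B2 [A2_gt0 B2_gt0 up2 lo2]]] orth.
have fsE a b : frame_sum (dsum_ip ip1 ip2) (dsum_seq x y) (a, b) =
    (frame_sum ip1 x a + frame_sum ip2 y b)%E.
  apply: frame_sum_dsum; last by rewrite orth.
  - exact: le_lt_trans (up1 a) (ltry _).
  - exact: le_lt_trans (up2 b) (ltry _).
exists (Num.min A1 A2), (Num.max B1 B2); split.
- by rewrite lt_min A1_gt0 A2_gt0.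
- by rewrite lt_max B1_gt0.
- case=> a b; rewrite fsE ipnorm_dsum_sqr //.
  apply: le_trans (leeD (up1 a) (up2 b)) _.
  by rewrite -EFinD lee_fin ler_maxMD // sqr_ge0.
- move=> T /(dsum_adjoint ip1_inner ip2_inner K0 L0) [K' [L' [adjK adjL TE]]] [a b].
  rewrite TE fsE ipnorm_dsum_sqr //.
  apply: le_trans (leeD (lo1 K' adjK a) (lo2 L' adjL b)).
  by rewrite -EFinD lee_fin ler_minMD // sqr_ge0.
Qed.
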